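(* Let $n$ be a nonnegative integer and $a,b\in\mathbb{C}$ such that all expressions below are defined (no lower parameter zero or a negative integer). Then \[ \left[{}_3F_2\!\left(\left.{\frac{a}{2},\frac{a+1}{2},b \atop a,1+a+n}\right| 4\right)\right]_n =\frac{(b)_n}{n!}\,{}_4F_3\!\left(\left.{-n,\frac{1+a-b}{2},\frac{2+a-b}{2},1 \atop 1+a-b,1-b-n,1+a+n}\right| 4\right). \]
   Context: For $a\in\mathbb{C}$, $(a)_0=1$ and $(a)_k=a(a+1)\cdots(a+k-1)$ for $k\ge1$. The hypergeometric series is ${}_rF_s\!\left(\left.{\alpha_1,\ldots,\alpha_r\atop \beta_1,\ldots,\beta_s}\right|z\right)=\sum_{k\ge0}\frac{(\alpha_1)_k\cdots(\alpha_r)_k}{k!(\beta_1)_k\cdots(\beta_s)_k}z^k$, with no lower parameter zero or a negative integer; it is a finite sum when an upper parameter is $-n$. The bracket $\left[{}_rF_s\!\left(\left.{\alpha_1,\ldots,\alpha_r\atop \beta_1,\ldots,\beta_s}\right|z\right)\right]_n$ denotes the sum of the first $n+1$ terms, $\sum_{k=0}^{n}\frac{(\alpha_1)_k\cdots(\alpha_r)_k}{k!(\beta_1)_k\cdots(\beta_s)_k}z^k$. *)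

From HB Require Import structures.
From mathcomp Require Import all_boot all_order all_algebra.
From mathcomp Require Import complex.
From mathcomp Require Import reals.
Set Implicit Arguments. Unset Strict Implicit. Unset Printing Implicit Defensive.
Import Order.TTheory GRing.Theory Num.Theory.
Local Open Scope ring_scope.

Definition poch {F : ringType} (a : F) (k : nat) : F :=
  \prod_(i < k) (a + i%:R).

Definition nonpos_int {F : ringType} (x : F) : Prop :=
  exists m : nat, x = - m%:R.

Definition hyp_term {F : fieldType} (alphas betas : seq F) (z : F) (k : nat) : F :=
  (\prod_(a <- alphas) poch a k) /
  (k`!%:R * \prod_(b <- betas) poch b k) * z ^+ k.

(* [ rF_s(alphas; betas | z) ]_n : sum of the first n+1 terms *)
Definition hypF_trunc {F : fieldType} (alphas betas : seq F) (z : F) (n : nat) : F :=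
  \sum_(k < n.+1) hyp_term alphas betas z k.

(* terminating rF_s whose upper parameters contain -n : the finite sum k = 0..n
   (all later terms vanish since (-n)_k = 0 for k > n) *)
Definition hypF_terminating {F : fieldType} (n : nat) (alphas betas : seq F) (z : F) : F :=
  hypF_trunc ((- n%:R) :: alphas) betas z n.

From HB Require Import structures.
From mathcomp Require Import all_boot all_order all_algebra.
From mathcomp Require Import complex.
From mathcomp Require Import reals.
From mathcomp Require Import ring zify.
Set Implicit Arguments. Unset Strict Implicit. Unset Printing Implicit Defensive.
Import Order.TTheory GRing.Theory Num.Theory.
Local Open Scope ring_scope.
Local Open Scope complex_scope.

(* With s = 1 + a + n, Legendre duplication (x/2)_k ((x+1)/2)_k 4^k = (x)_2k turns
   the left-hand side into sum_m (b)_m/m! (a+m)_m/(s)_m, and, together with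
   (b)_n (-n)_k / (n! (1-b-n)_k) = (b)_(n-k) / (n-k)!, the right-hand side into
   sum_k (b)_(n-k)/(n-k)! (1+a-b+k)_k/(s)_k.  As a + m = s - (n-m+1) and
   1 + a - b + k = s - (b+n-k), the Chu-Vandermonde identity
   (s-z)_m/(s)_m = sum_i C(m,i) (-1)^i (z)_i/(s)_i expands both sums into double
   sums over the triangle i + j <= n, which after exchanging the order of summation
   are both sum (-1)^i C(n-j,i) (b)_(i+j) / (j! (s)_i). *)

Section PochhammerRing.
Variable R : nzRingType.
Implicit Types x : R.

Lemma poch0 x : poch x 0 = 1.
Proof. by rewrite /poch big_ord0. Qed.

Lemma pochS x k : poch x k.+1 = poch x k * (x + k%:R).
Proof. by rewrite /poch big_ord_recr. Qed.

Lemma pochD x i j : poch x (i + j)%N = poch x i * poch (x + i%:R) j.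
Proof.
elim: j => [|j IHj]; first by rewrite addn0 poch0 mulr1.
by rewrite addnS !pochS IHj natrD addrA mulrA.
Qed.

Lemma pochSl x k : poch x k.+1 = x * poch (x + 1) k.
Proof. by rewrite -add1n pochD /poch big_ord1 addr0. Qed.

Lemma poch1 k : poch (1 : R) k = k`!%:R.
Proof.
elim: k => [|k IHk]; first by rewrite poch0.
by rewrite pochS IHk factS mulnC natrM -natr1 addrC.
Qed.

Lemma poch_natS_ffact m k : poch (m.+1%:R : R) k = ((m + k) ^_ k)%:R.
Proof.
elim: k => [|k IHk]; first by rewrite poch0 ffactn0.
by rewrite pochS IHk addnS ffactSS mulnC natrM -natrD addSn.
Qed.

End PochhammerRing.

Lemma sum_bin_pascal (S : pzSemiRingType) (f : nat -> S) k :
  \sum_(0 <= i < k.+2) 'C(k.+1, i)%:R * f i =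
  \sum_(0 <= i < k.+1) 'C(k, i)%:R * (f i + f i.+1).
Proof.
rewrite big_nat_recl // bin0.
under eq_bigr do rewrite binS natrD mulrDl.
rewrite big_split /= big_nat_recr //= bin_small // mul0r addr0 addrA.
under [RHS]eq_bigr do rewrite mulrDr.
by rewrite big_split /= [in RHS]big_nat_recl // bin0.
Qed.

Lemma sum_nat_triangle (V : nmodType) (f : nat -> nat -> V) n :
  \sum_(0 <= m < n.+1) \sum_(0 <= i < m.+1) f m i =
  \sum_(0 <= i < n.+1) \sum_(0 <= j < (n - i).+1) f (i + j)%N i.
Proof.
elim: n => [|n IHn]; first by rewrite !big_nat1.
rewrite big_nat_recr //= IHn [RHS]big_nat_recr //= subnn big_nat1 /= addn0.
rewrite [X in _ = X + _](_ : _ = \sum_(0 <= i < n.+1)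
    (\sum_(0 <= j < (n - i).+1) f (i + j)%N i + f n.+1 i)); last first.
  apply: eq_big_nat => i /andP[_ lt_in].
  by rewrite subSn // big_nat_recr //= addnS subnKC.
by rewrite big_split /= -addrA -big_nat_recr.
Qed.

Section PochhammerComRing.
Variable R : comNzRingType.
Implicit Types x y z : R.

Lemma poch_reflect x k : poch x k = (-1) ^+ k * poch (- x - k%:R + 1) k.
Proof.
elim: k x => [|k IHk] x; first by rewrite !poch0 mulr1.
rewrite pochS IHk pochSl -natr1 exprS.
have -> : - x - (k%:R + 1) + 1 + 1 = - x - k%:R + 1 by ring.
ring.
Qed.

Lemma poch_oppn_fact j k :
  poch (- (j + k)%:R : R) k * j`!%:R = (-1) ^+ k * (j + k)`!%:R.
Proof.
rewrite poch_reflect -!poch1 pochD opprK natrD.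
have -> : j%:R + k%:R - k%:R + 1 = 1 + j%:R :> R by ring.
ring.
Qed.

Lemma poch_reflect_split x j k :
  poch x (j + k)%N = (-1) ^+ k * poch x j * poch (1 - x - (j + k)%:R) k.
Proof.
rewrite pochD [poch (x + _) _]poch_reflect natrD.
have -> : - (x + j%:R) - k%:R + 1 = 1 - x - (j%:R + k%:R) by ring.
ring.
Qed.

Lemma poch_oppn_reflect x j k :
  poch x (j + k)%N * poch (- (j + k)%:R) k * j`!%:R =
  poch x j * poch (1 - x - (j + k)%:R) k * (j + k)`!%:R.
Proof.
rewrite -mulrA poch_oppn_fact poch_reflect_split -[RHS](signrMK k).
ring.
Qed.

Lemma chu_vandermonde_poch y z k :
  poch (y - z) k = \sum_(0 <= i < k.+1)
    'C(k, i)%:R * ((-1) ^+ i * poch z i * poch (y + i%:R) (k - i)).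
Proof.
elim: k y => [|k IHk] y; first by rewrite big_nat1 !poch0 bin0 !mulr1.
rewrite (@sum_bin_pascal _ (fun i => (-1) ^+ i * poch z i * poch (y + i%:R) (k.+1 - i))).
rewrite pochSl (addrAC y) IHk mulr_sumr; apply: eq_big_nat => i /andP[_ le_ik].
rewrite subSS subSn // pochSl pochS -natr1 exprS (addrAC y) addrA.
ring.
Qed.

End PochhammerComRing.

Lemma poch_neq0 (D : idomainType) (x : D) k : ~ nonpos_int x -> poch x k != 0.
Proof.
move=> x_nonpos; elim: k => [|k IHk]; first by rewrite poch0 oner_neq0.
rewrite pochS mulf_neq0 //; apply: contra_notN x_nonpos => xk0.
by exists k; apply/eqP; rewrite -addr_eq0.
Qed.

Lemma chu_vandermonde (F : fieldType) (y z : F) k : poch y k != 0 ->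
  poch (y - z) k / poch y k =
  \sum_(0 <= i < k.+1) 'C(k, i)%:R * ((-1) ^+ i * poch z i / poch y i).
Proof.
move=> yk_neq0; rewrite chu_vandermonde_poch mulr_suml.
apply: eq_big_nat => i /andP[_ /[!ltnS] le_ik].
move: yk_neq0; rewrite -(subnKC le_ik) pochD addKn mulf_eq0 negb_or.
move=> /andP[yi_neq0 yik_neq0].
by field; rewrite yi_neq0 yik_neq0.
Qed.

Section PochhammerNumField.
Variable F : numFieldType.
Implicit Types x : F.

Lemma natr_fact_neq0 k : (k`!%:R : F) != 0.
Proof. by rewrite pnatr_eq0 -lt0n fact_gt0. Qed.

Lemma poch_duplication x k :
  poch (x / 2) k * poch ((x + 1) / 2) k * 4 ^+ k = poch x k.*2.
Proof.
elim: k => [|k IHk]; first by rewrite !poch0 !mulr1.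
rewrite doubleS !pochS -IHk exprS -!mul2n !natrM -!natr1.
by field.
Qed.

Lemma poch_shift_duplication x k : poch x k != 0 ->
  poch (x + k%:R) k = poch (x / 2) k * poch ((x + 1) / 2) k * 4 ^+ k / poch x k.
Proof.
by move=> xk_neq0; rewrite poch_duplication -addnn pochD mulrC mulKf.
Qed.

End PochhammerNumField.

Section Transformation.
Variables (F : numFieldType) (a b : F) (n : nat).
Hypothesis s_poch_neq0 : forall k, poch (1 + a + n%:R) k != 0.

Lemma transform_lhs_double_sum :
  \sum_(0 <= m < n.+1) poch b m / m`!%:R * poch (a + m%:R) m / poch (1 + a + n%:R) m =
  \sum_(0 <= i < n.+1) \sum_(0 <= j < (n - i).+1)
     (-1) ^+ i * 'C(n - j, i)%:R * poch b (i + j)%N / (j`!%:R * poch (1 + a + n%:R) i).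
Proof.
under eq_big_nat => m /andP[_ lt_mn].
  have -> : a + m%:R = 1 + a + n%:R - (n - m).+1%:R by rewrite -natr1 natrB; [ring | lia].
  rewrite -mulrA chu_vandermonde // mulr_sumr.
  over.
rewrite sum_nat_triangle; apply: eq_big_nat => i /andP[_ lt_in].
apply: eq_big_nat => j /andP[_ lt_jni].
rewrite poch_natS_ffact.
have -> : (n - (i + j) + i = n - j)%N by lia.
rewrite -bin_ffact -(bin_fact (leq_addr j i)) addKn !natrM.
have Cij_neq0 : 'C(i + j, i)%:R != 0 :> F by rewrite pnatr_eq0 -lt0n bin_gt0 leq_addr.
by field; rewrite Cij_neq0 s_poch_neq0 !natr_fact_neq0.
Qed.

Lemma transform_rhs_double_sum :
  \sum_(0 <= k < n.+1) poch b (n - k) / (n - k)`!%:R * poch (1 + a - b + k%:R) k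
    / poch (1 + a + n%:R) k =
  \sum_(0 <= i < n.+1) \sum_(0 <= j < (n - i).+1)
     (-1) ^+ i * 'C(n - j, i)%:R * poch b (i + j)%N / (j`!%:R * poch (1 + a + n%:R) i).
Proof.
under eq_big_nat => k /andP[_ lt_kn].
  have -> : 1 + a - b + k%:R = 1 + a + n%:R - (b + (n - k)%:R) by rewrite natrB; [ring | lia].
  rewrite -mulrA chu_vandermonde // mulr_sumr.
  over.
rewrite sum_nat_triangle; apply: eq_big_nat => i /andP[_ lt_in].
rewrite big_nat_rev /=; apply: eq_big_nat => j /andP[_ lt_jni].
rewrite add0n subSS.
have -> : (i + (n - i - j) = n - j)%N by lia.
have -> : (n - (n - j) = j)%N by lia.
rewrite [in RHS]addnC pochD.
by field; rewrite s_poch_neq0 natr_fact_neq0.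
Qed.

Lemma hyp_term_lhs k : poch a k != 0 ->
  hyp_term [:: a / 2; (a + 1) / 2; b] [:: a; 1 + a + n%:R] 4 k =
  poch b k / k`!%:R * poch (a + k%:R) k / poch (1 + a + n%:R) k.
Proof.
move=> ak_neq0; rewrite /hyp_term !big_cons !big_nil !mulr1.
rewrite poch_shift_duplication //.
by field; rewrite s_poch_neq0 ak_neq0 natr_fact_neq0.
Qed.

Lemma hyp_term_rhs k : (k <= n)%N ->
  poch (1 + a - b) k != 0 -> poch (1 - b - n%:R) k != 0 ->
  poch b n / n`!%:R *
  hyp_term [:: - n%:R; (1 + a - b) / 2; (2 + a - b) / 2; 1]
           [:: 1 + a - b; 1 - b - n%:R; 1 + a + n%:R] 4 k =
  poch b (n - k) / (n - k)`!%:R * poch (1 + a - b + k%:R) k / poch (1 + a + n%:R) k.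
Proof.
move=> le_kn abk_neq0 bnk_neq0; rewrite /hyp_term !big_cons !big_nil !mulr1 poch1.
have -> : (2 + a - b) / 2 = (1 + a - b + 1) / 2 by congr (_ / _); ring.
rewrite poch_shift_duplication //.
have := poch_oppn_reflect b (n - k) k; rewrite subnK // => nk_reflect.
have -> : poch b (n - k) =
    poch b n * poch (- n%:R) k * (n - k)`!%:R / (poch (1 - b - n%:R) k * n`!%:R).
  by rewrite nk_reflect; field; rewrite bnk_neq0 natr_fact_neq0.
by field; rewrite s_poch_neq0 abk_neq0 bnk_neq0 !natr_fact_neq0.
Qed.

End Transformation.

Theorem mainTheorem10 (R : realType) (n : nat) (a b : R[i])
  (ha : ~ nonpos_int a)
  (h1 : ~ nonpos_int (1 + a + n%:R))
  (h2 : ~ nonpos_int (1 + a - b))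
  (h3 : ~ nonpos_int (1 - b - n%:R)) :
  hypF_trunc [:: a / 2; (a + 1) / 2; b] [:: a; 1 + a + n%:R] 4 n =
  poch b n / n`!%:R *
  hypF_terminating n [:: (1 + a - b) / 2; (2 + a - b) / 2; 1]
                     [:: 1 + a - b; 1 - b - n%:R; 1 + a + n%:R] 4.
Proof.
have s_poch_neq0 k := poch_neq0 k h1.
rewrite /hypF_terminating /hypF_trunc -!(big_mkord xpredT) mulr_sumr.
under eq_big_nat => k _ do rewrite hyp_term_lhs ?poch_neq0 //.
under [RHS]eq_big_nat => k /andP[_ lt_kn] do rewrite hyp_term_rhs ?poch_neq0 //.
by rewrite transform_lhs_double_sum // transform_rhs_double_sum.
Qed.
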